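(* Let $\rho:\mathbb Z^s\to GL(k,\mathbb Z)$ be a special homomorphism and let $f_1,f_2:G_{s,k}(\rho)\to\mathbb Z^s$ be epimorphisms. Then there is an isomorphism $\psi:\mathbb Z^s\to\mathbb Z^s$ such that $f_2=\psi\circ f_1$.
   Context: $G_{s,k}(\rho)$ is the semidirect product $\mathbb Z^s\ltimes\mathbb Z^k$ with multiplication $(g,v)(h,w)=(g+h,v+\rho(g)w)$. $\rho$ is special if there is $g\in\mathbb Z^s$ such that $1$ is not an eigenvalue of $\rho(g)$. *)

(* Z^s = 'rV[int]_s, Z^k = 'cV[int]_k (column vectors, so
   that rho g acts by left matrix multiplication). *)
From mathcomp Require Import all_boot all_order all_algebra.
Set Implicit Arguments. Unset Strict Implicit. Unset Printing Implicit Defensive.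
Import GRing.Theory Num.Theory.
Local Open Scope ring_scope.

Definition is_GL_rep (s k : nat) (rho : 'rV[int]_s -> 'M[int]_k) : Prop :=
  [/\ forall g, rho g \in unitmx,
      rho 0 = 1%:M &
      forall g h, rho (g + h) = rho g *m rho h].

(* rho is special: some rho(g) does not have 1 as an eigenvalue
   (eigenvalues taken over Q, equivalently over C since 1 is rational). *)
Definition special (s k : nat) (rho : 'rV[int]_s -> 'M[int]_k) : Prop :=
  exists g, ~~ eigenvalue (map_mx (intr : int -> rat) (rho g)) 1.

Definition Gcarrier (s k : nat) := ('rV[int]_s * 'cV[int]_k)%type.

Definition Gmul (s k : nat) (rho : 'rV[int]_s -> 'M[int]_k)
  (x y : Gcarrier s k) : Gcarrier s k :=
  (x.1 + y.1, x.2 + rho x.1 *m y.2).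

Definition is_epi (s k : nat) (rho : 'rV[int]_s -> 'M[int]_k)
  (f : Gcarrier s k -> 'rV[int]_s) : Prop :=
  (forall x y, f (Gmul rho x y) = f x + f y) /\
  (forall z, exists x, f x = z).

Definition is_aut (s : nat) (psi : 'rV[int]_s -> 'rV[int]_s) : Prop :=
  (forall a b, psi (a + b) = psi a + psi b) /\ bijective psi.

From HB Require Import structures.
From mathcomp Require Import all_boot all_order all_algebra.
Set Implicit Arguments. Unset Strict Implicit. Unset Printing Implicit Defensive.
Import GRing.Theory.

(* An epimorphism f : G -> Z^s is additive on the normal subgroup Z^k and
   invariant under every rho g, so it vanishes on the image of rho g0 - 1.
   When 1 is not an eigenvalue of rho g0 this image has finite index
   det (rho g0 - 1), and Z^s is torsion-free, so f kills Z^k.  Hence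
   f (g, v) = g M for an integer matrix M, invertible because f is onto,
   and f2 = f1 followed by right multiplication by M1^-1 M2. *)
Local Open Scope ring_scope.

Section IntAdditive.
Variables (U V : lmodType int) (h : U -> V).
Hypothesis hD : {morph h : a b / a + b}.

Lemma additive_zmod_morphism : zmod_morphism h.
Proof. by move=> a b; apply: (addIr (h b)); rewrite -hD !subrK. Qed.

HB.instance Definition _ := GRing.isZmodMorphism.Build _ _ h additive_zmod_morphism.

Lemma additive_int_scalable : scalable h.
Proof. by move=> z a; rewrite -[z]intz !scaler_int raddfMz. Qed.

End IntAdditive.

Definition int_linear (U V : lmodType int) (h : U -> V)
    (hD : {morph h : a b / a + b}) : {linear U -> V} :=
  HB.pack h (GRing.isZmodMorphism.Build _ _ h (additive_zmod_morphism hD))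
    (GRing.isScalable.Build _ _ _ _ h (additive_int_scalable hD)).

Lemma additive_rV_lin1 m n (h : 'rV[int]_m -> 'rV[int]_n) :
  {morph h : a b / a + b} -> forall u, h u = u *m lin1_mx h.
Proof. by move=> hD u; rewrite (mul_rV_lin1 (int_linear hD)). Qed.

Lemma additive_invariant_eq0 k m n (h : 'cV[int]_k -> 'M[int]_(m, n))
    (A : 'M[int]_k) :
  {morph h : a b / a + b} -> (forall w, h (A *m w) = h w) ->
  \det (A - 1%:M) != 0 -> forall v, h v = 0.
Proof.
move=> hD hA detA v.
have hB w : h ((A - 1%:M) *m w) = 0.
  by rewrite mulmxBl mul1mx (additive_zmod_morphism hD) hA subrr.
have := hB (\adj (A - 1%:M) *m v).
rewrite mulmxA mul_mx_adj mul_scalar_mx (additive_int_scalable hD) => /eqP.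
by rewrite scalemx_eq0 (negPf detA) => /eqP.
Qed.

Lemma no_eigenvalue1_det_neq0 k (A : 'M[int]_k) :
  ~~ eigenvalue (map_mx (intr : int -> rat) A) 1 -> \det (A - 1%:M) != 0.
Proof.
apply: contraNneq => detA.
rewrite /eigenvalue /eigenspace kermx_eq0 row_free_unit unitmxE.
have -> : map_mx intr A - 1%:M = map_mx (intr : int -> rat) (A - 1%:M).
  by rewrite map_mxB map_mx1.
by rewrite det_map_mx detA rmorph0 unitr0.
Qed.

Lemma surj_mulmx_unitmx (R : comUnitRingType) n (M : 'M[R]_n) :
  (forall z : 'rV_n, exists u, u *m M = z) -> M \in unitmx.
Proof.
move=> Msurj; have [u uM] := fin_all_exists (fun i : 'I_n => Msurj (delta_mx 0 i)).
suff /mulmx1_unit[] : \matrix_i u i *m M = 1%:M by [].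
by apply/row_matrixP => i; rewrite row_mul rowK uM row1.
Qed.

Lemma mulmxr_is_aut s (P : 'M[int]_s) : P \in unitmx -> is_aut (mulmxr P).
Proof.
move=> Pu; split; first exact: linearD.
by exists (mulmxr (invmx P)) => y /=; [exact: mulmxK | exact: mulmxKV].
Qed.

Section SemidirectHom.
Variables (s k n : nat) (rho : 'rV[int]_s -> 'M[int]_k).
Variable f : Gcarrier s k -> 'rV[int]_n.
Hypothesis rho0 : rho 0 = 1%:M.
Hypothesis fM : forall x y, f (Gmul rho x y) = f x + f y.

Lemma hom_pair_split g v : f (g, v) = f (0, v) + f (g, 0).
Proof. by rewrite -fM /Gmul /= add0r mulmx0 addr0. Qed.

Lemma hom_fiber_additive : {morph (fun v => f (0, v)) : v w / v + w}.
Proof. by move=> v w /=; rewrite -fM /Gmul /= addr0 rho0 mul1mx. Qed.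

Lemma hom_base_additive : {morph (fun g => f (g, 0)) : g h / g + h}.
Proof. by move=> g h /=; rewrite -fM /Gmul /= mulmx0 addr0. Qed.

Lemma hom_fiber_invariant g w : f (0, rho g *m w) = f (0, w).
Proof.
apply: (addIr (f (g, 0))); rewrite -hom_pair_split addrC.
by rewrite -fM /Gmul /= addr0 add0r.
Qed.

Lemma hom_fiber_eq0 : special rho -> forall v, f (0, v) = 0.
Proof.
move=> [g0 /no_eigenvalue1_det_neq0 detA].
apply: (additive_invariant_eq0 hom_fiber_additive _ detA).
exact: hom_fiber_invariant.
Qed.

Lemma hom_mul_proj : special rho ->
  forall x, f x = x.1 *m lin1_mx (fun g => f (g, 0)).
Proof.
move=> sp [g v]; rewrite hom_pair_split hom_fiber_eq0 // add0r.
exact: additive_rV_lin1 hom_base_additive g.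
Qed.

End SemidirectHom.

Lemma epi_mul_unitmx s k (rho : 'rV[int]_s -> 'M[int]_k)
    (f : Gcarrier s k -> 'rV[int]_s) :
  is_GL_rep rho -> special rho -> is_epi rho f ->
  exists2 M : 'M[int]_s, M \in unitmx & forall x, f x = x.1 *m M.
Proof.
move=> [_ rho0 _] sp [fM fS]; have fE := hom_mul_proj rho0 fM sp.
exists (lin1_mx (fun g => f (g, 0))) => //.
apply: surj_mulmx_unitmx => z; have [x <-] := fS z.
by exists x.1; rewrite fE.
Qed.

Theorem lemma6p8 (s k : nat) (rho : 'rV[int]_s -> 'M[int]_k)
  (f1 f2 : Gcarrier s k -> 'rV[int]_s) :
  is_GL_rep rho -> special rho -> is_epi rho f1 -> is_epi rho f2 ->
  exists psi : 'rV[int]_s -> 'rV[int]_s,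
    is_aut psi /\ forall x, f2 x = psi (f1 x).
Proof.
move=> rhoGL sp f1epi f2epi.
have [M1 M1u f1E] := epi_mul_unitmx rhoGL sp f1epi.
have [M2 M2u f2E] := epi_mul_unitmx rhoGL sp f2epi.
exists (mulmxr (invmx M1 *m M2)); split.
  by apply: mulmxr_is_aut; rewrite unitmx_mul unitmx_inv M1u.
by move=> x; rewrite f1E f2E /= mulmxA mulmxK.
Qed.
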